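(* If $G$ is a connected $\mathcal{C}$-$\mathrm{HH}$ graph which is not a tree, then its girth satisfies $g(G)\le 6$.
   Context: The girth $g(G)$ is the minimum length of a cycle in $G$. Subgraphs are induced; a homomorphism maps edges to edges. A graph $G$ is $\mathcal{C}$-$\mathrm{HH}$ if every homomorphism from a finite connected induced subgraph of $G$ into $G$ extends to a homomorphism $G\to G$. *)

(* Graphs may be infinite: a simple graph is a type of vertices
   with a symmetric irreflexive adjacency relation. *)
From Stdlib Require Import Arith List Relations.

Record graph := Graph {
  vertex :> Type;
  adj : vertex -> vertex -> Prop;
  adj_sym : forall x y, adj x y -> adj y x;
  adj_irrefl : forall x, ~ adj x x
}.

Definition connected_in (G : graph) (S : G -> Prop) (x y : G) : Prop :=
  clos_refl_trans G (fun u v => S u /\ S v /\ adj G u v) x y.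

Definition connected (G : graph) : Prop :=
  forall x y : G, connected_in G (fun _ => True) x y.

Definition is_cycle (G : graph) (n : nat) (c : nat -> G) : Prop :=
  3 <= n /\
  (forall i j, i < n -> j < n -> c i = c j -> i = j) /\
  (forall i, i < n -> adj G (c i) (c ((i + 1) mod n))).

Definition has_cycle_of_length (G : graph) (n : nat) : Prop :=
  exists c : nat -> G, is_cycle G n c.

Definition acyclic (G : graph) : Prop := forall n, ~ has_cycle_of_length G n.
Definition is_tree (G : graph) : Prop := connected G /\ acyclic G.

Definition is_girth (G : graph) (g : nat) : Prop :=
  has_cycle_of_length G g /\ (forall n, has_cycle_of_length G n -> g <= n).

Definition finite_set (G : graph) (S : G -> Prop) : Prop :=
  exists l : list G, forall x, S x -> In x l.

Definition induced_connected (G : graph) (S : G -> Prop) : Prop :=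
  forall x y, S x -> S y -> connected_in G S x y.

(* f : V -> V restricted to S is a homomorphism from G[S] into G
   (values of f outside S are irrelevant) *)
Definition hom_on (G : graph) (S : G -> Prop) (f : G -> G) : Prop :=
  forall x y, S x -> S y -> adj G x y -> adj G (f x) (f y).

Definition hom (G : graph) (h : G -> G) : Prop :=
  forall x y, adj G x y -> adj G (h x) (h y).

Definition C_HH (G : graph) : Prop :=
  forall (S : G -> Prop) (f : G -> G),
    finite_set G S -> induced_connected G S -> hom_on G S f ->
    exists h : G -> G, hom G h /\ (forall x, S x -> h x = f x).

(* Take a shortest cycle c_0 ... c_(g-1) and suppose g >= 7.  The path P = c_0 ... c_(g-2)
   is induced, so folding it onto c_0 c_1 c_2 c_3 c_4 (zig-zagging between c_3 and c_4 after
   c_3) is a homomorphism P -> G fixing c_0 and sending c_(g-2) to c_3 or c_4.  An extension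
   to G must send c_(g-1), the common neighbour of c_0 and c_(g-2), to a common neighbour w
   of c_0 and c_m (m = 3 or 4).  Then c_0 ... c_m w is a cycle of length at most 6 < g, or,
   if w lies on the cycle, a chord of it: either way minimality of g is contradicted. *)
From Stdlib Require Import Arith List Relations Lia Classical ClassicalEpsilon.

Lemma least_nat (P : nat -> Prop) :
  (exists n, P n) -> exists n, P n /\ forall k, P k -> n <= k.
Proof.
  intros [n Pn]. induction n as [n IH] using (well_founded_induction lt_wf).
  destruct (classic (exists k, k < n /\ P k)) as [[k [Hk Pk]] | Hnone].
  - exact (IH k Hk Pk).
  - exists n. split; [exact Pn |]. intros k Pk.
    destruct (le_lt_dec n k) as [Hle | Hlt]; [exact Hle |].
    exfalso. apply Hnone. eauto.
Qed.

Lemma exists_fun_on_injective_seq (T U : Type) (d : nat -> T) (K : nat) (e : nat -> U) :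
  (forall i j, i <= K -> j <= K -> d i = d j -> i = j) ->
  exists f : T -> U, forall i, i <= K -> f (d i) = e i.
Proof.
  intros Hinj.
  exists (fun x => e (epsilon (inhabits 0) (fun i => i <= K /\ d i = x))).
  intros i Hi.
  destruct (epsilon_spec (inhabits 0) (fun k => k <= K /\ d k = d i)
              (ex_intro _ i (conj Hi eq_refl))) as [Hk E].
  f_equal. apply Hinj; assumption.
Qed.

Lemma is_cycle_intro (G : graph) (n : nat) (d : nat -> G) :
  3 <= n ->
  (forall i j, i < n -> j < n -> d i = d j -> i = j) ->
  (forall i, i + 1 < n -> adj G (d i) (d (i + 1))) ->
  adj G (d (n - 1)) (d 0) ->
  is_cycle G n d.
Proof.
  intros Hn Hinj Hstep Hlast. split; [exact Hn | split; [exact Hinj |]].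
  intros i Hi. destruct (Nat.eq_dec (i + 1) n) as [E | E].
  - rewrite E, Nat.Div0.mod_same. replace i with (n - 1) by lia. exact Hlast.
  - rewrite Nat.mod_small by lia. apply Hstep. lia.
Qed.

Lemma cycle_adj_succ (G : graph) (n : nat) (c : nat -> G) i :
  is_cycle G n c -> i + 1 < n -> adj G (c i) (c (i + 1)).
Proof.
  intros [_ [_ Hadj]] Hi. specialize (Hadj i ltac:(lia)).
  rewrite Nat.mod_small in Hadj by lia. exact Hadj.
Qed.

Lemma cycle_adj_last (G : graph) (n : nat) (c : nat -> G) :
  is_cycle G n c -> adj G (c (n - 1)) (c 0).
Proof.
  intros [Hn [_ Hadj]]. specialize (Hadj (n - 1) ltac:(lia)).
  replace (n - 1 + 1) with n in Hadj by lia.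
  rewrite Nat.Div0.mod_same in Hadj. exact Hadj.
Qed.

Lemma cycle_adj_consecutive (G : graph) (n : nat) (c : nat -> G) a b :
  is_cycle G n c -> b = a + 1 \/ a = b + 1 -> a + 1 < n -> b + 1 < n -> adj G (c a) (c b).
Proof.
  intros Hc [-> | ->] Ha Hb.
  - now apply cycle_adj_succ with n.
  - apply adj_sym. now apply cycle_adj_succ with n.
Qed.

Definition fold_index (i : nat) : nat :=
  if i <=? 3 then i else if Nat.even i then 4 else 3.

Lemma fold_index_le i : fold_index i <= 4.
Proof. unfold fold_index. destruct (Nat.leb_spec i 3), (Nat.even i); lia. Qed.

Lemma fold_index_ge i : 3 <= i -> 3 <= fold_index i.
Proof. intros Hi. unfold fold_index. destruct (Nat.leb_spec i 3), (Nat.even i); lia. Qed.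

Lemma fold_index_step i :
  fold_index (i + 1) = fold_index i + 1 \/ fold_index i = fold_index (i + 1) + 1.
Proof.
  unfold fold_index. rewrite Nat.add_1_r, Nat.even_succ, <- Nat.negb_even.
  destruct (Nat.leb_spec i 3), (Nat.leb_spec (S i) 3), (Nat.even i) eqn:E; simpl; try lia.
  all: assert (i = 3) by lia; subst; discriminate.
Qed.

Definition segment (G : graph) (d : nat -> G) (K : nat) : G -> Prop :=
  fun x => exists i, i <= K /\ d i = x.

Lemma connected_in_sym (G : graph) (S : G -> Prop) x y :
  connected_in G S x y -> connected_in G S y x.
Proof.
  induction 1 as [u v [Su [Sv Huv]] | | u v w _ IHuv _ IHvw].
  - apply rt_step. repeat split; auto. now apply adj_sym.
  - apply rt_refl.
  - eapply rt_trans; eassumption.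
Qed.

Section Segment.

Variables (G : graph) (d : nat -> G) (K : nat).

Lemma segment_finite : finite_set G (segment G d K).
Proof.
  exists (map d (seq 0 (K + 1))). intros x [i [Hi <-]].
  apply in_map, in_seq. lia.
Qed.

Hypothesis walk_d : forall i, i < K -> adj G (d i) (d (i + 1)).

Lemma segment_connected_from_start i :
  i <= K -> connected_in G (segment G d K) (d 0) (d i).
Proof.
  induction i as [| i IH]; intros Hi; [apply rt_refl |].
  eapply rt_trans; [apply IH; lia |]. apply rt_step.
  split; [exists i; split; [lia | reflexivity] |].
  split; [exists (S i); split; [lia | reflexivity] |].
  rewrite <- Nat.add_1_r. apply walk_d. lia.
Qed.

Lemma segment_connected : induced_connected G (segment G d K).
Proof.
  intros x y [i [Hi <-]] [j [Hj <-]].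
  eapply rt_trans.
  - apply connected_in_sym, segment_connected_from_start, Hi.
  - apply segment_connected_from_start, Hj.
Qed.

Lemma segment_hom_on (e : nat -> G) (f : G -> G) :
  (forall i j, i <= K -> j <= K -> adj G (d i) (d j) -> i = j + 1 \/ j = i + 1) ->
  (forall i, i < K -> adj G (e i) (e (i + 1))) ->
  (forall i, i <= K -> f (d i) = e i) ->
  hom_on G (segment G d K) f.
Proof.
  intros Hchordless Hwalk Hf x y [i [Hi <-]] [j [Hj <-]] Hadj.
  rewrite (Hf i Hi), (Hf j Hj).
  destruct (Hchordless i j Hi Hj Hadj) as [-> | ->].
  - apply adj_sym, Hwalk. lia.
  - apply Hwalk. lia.
Qed.

End Segment.

Section MinimalCycle.

Variables (G : graph) (g : nat) (c : nat -> G).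
Hypothesis cycle_c : is_cycle G g c.
Hypothesis girth_min : forall n, has_cycle_of_length G n -> g <= n.

Lemma minimal_cycle_inj i j : i < g -> j < g -> c i = c j -> i = j.
Proof. apply cycle_c. Qed.

(* A chord between c_i and c_j (avoiding the last vertex) cuts off the shorter cycle
   c_i ... c_j. *)
Lemma minimal_cycle_chord_succ i j :
  i < j -> j + 1 < g -> adj G (c i) (c j) -> j = i + 1.
Proof.
  intros Hij Hjg Hadj. destruct (Nat.eq_dec j (i + 1)) as [E | Hne]; [exact E | exfalso].
  assert (Hcyc : is_cycle G (j - i + 1) (fun t => c (i + t))).
  { apply is_cycle_intro; [lia | | | ].
    - intros a b Ha Hb E. apply minimal_cycle_inj in E; lia.
    - intros t Ht. replace (i + (t + 1)) with (i + t + 1) by lia.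
      apply cycle_adj_succ with g; [exact cycle_c | lia].
    - replace (i + (j - i + 1 - 1)) with j by lia. rewrite Nat.add_0_r.
      now apply adj_sym. }
  specialize (girth_min _ (ex_intro _ _ Hcyc)). lia.
Qed.

Lemma minimal_cycle_chordless i j :
  i + 1 < g -> j + 1 < g -> adj G (c i) (c j) -> i = j + 1 \/ j = i + 1.
Proof.
  intros Hi Hj Hadj. destruct (lt_eq_lt_dec i j) as [[Hlt | ->] | Hlt].
  - right. now apply minimal_cycle_chord_succ.
  - exfalso. exact (adj_irrefl G _ Hadj).
  - left. apply minimal_cycle_chord_succ; [lia | lia | now apply adj_sym].
Qed.

Lemma minimal_cycle_no_short_detour m (w : G) :
  3 <= m -> m + 2 < g -> adj G w (c 0) -> adj G (c m) w -> False.
Proof.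
  intros Hm Hmg Hw0 Hwm.
  assert (Hoff : forall t, t <= m -> c t <> w).
  { intros t Ht <-.
    pose proof (minimal_cycle_chordless t 0 ltac:(lia) ltac:(lia) Hw0).
    pose proof (minimal_cycle_chordless m t ltac:(lia) ltac:(lia) Hwm). lia. }
  set (d := fun t => if t <=? m then c t else w).
  assert (Hcyc : is_cycle G (m + 2) d).
  { apply is_cycle_intro; [lia | | | ]; unfold d.
    - intros a b Ha Hb E.
      destruct (Nat.leb_spec a m), (Nat.leb_spec b m).
      + apply minimal_cycle_inj in E; lia.
      + exfalso. exact (Hoff a ltac:(lia) E).
      + exfalso. exact (Hoff b ltac:(lia) (eq_sym E)).
      + lia.
    - intros t Ht. destruct (Nat.leb_spec t m); [| lia].
      destruct (Nat.leb_spec (t + 1) m).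
      + apply cycle_adj_succ with g; [exact cycle_c | lia].
      + replace t with m by lia. exact Hwm.
    - destruct (Nat.leb_spec (m + 2 - 1) m); [lia |]. exact Hw0. }
  specialize (girth_min _ (ex_intro _ _ Hcyc)). lia.
Qed.

Lemma minimal_cycle_fold_hom_on (f : G -> G) :
  7 <= g -> (forall i, i <= g - 2 -> f (c i) = c (fold_index i)) ->
  hom_on G (segment G c (g - 2)) f.
Proof.
  intros Hg Hf. apply segment_hom_on with (fun i => c (fold_index i)); [| | exact Hf].
  - intros i j Hi Hj. apply minimal_cycle_chordless; lia.
  - intros i _. pose proof (fold_index_le i). pose proof (fold_index_le (i + 1)).
    apply cycle_adj_consecutive with g; [exact cycle_c | apply fold_index_step | lia | lia].
Qed.

End MinimalCycle.

Theorem lemma5p7 (G : graph) :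
  connected G -> C_HH G -> ~ is_tree G ->
  exists g, is_girth G g /\ g <= 6.
Proof.
  intros Hconn HH Hnot_tree.
  assert (Hcycle : exists n, has_cycle_of_length G n).
  { apply NNPP. intros Hno. apply Hnot_tree. split; [exact Hconn |]. intros n Hn. eauto. }
  destruct (least_nat _ Hcycle) as [g [[c Hc] Hmin]].
  exists g. split; [split; [exists c |] |]; auto.
  destruct (le_lt_dec g 6) as [Hle | Hgt]; [exact Hle | exfalso].
  destruct (exists_fun_on_injective_seq G G c (g - 2) (fun i => c (fold_index i))) as [f Hf].
  { intros i j Hi Hj. apply (minimal_cycle_inj G g c Hc); lia. }
  assert (Hwalk : forall i, i + 1 < g -> adj G (c i) (c (i + 1))).
  { intros i Hi. exact (cycle_adj_succ G g c i Hc Hi). }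
  destruct (HH _ f (segment_finite G c (g - 2))
              (segment_connected G c (g - 2) ltac:(intros i Hi; apply Hwalk; lia))
              (minimal_cycle_fold_hom_on G g c Hc Hmin f ltac:(lia) Hf)) as [h [Hh Hext]].
  assert (Hh_fold : forall i, i <= g - 2 -> h (c i) = c (fold_index i)).
  { intros i Hi. rewrite Hext by (exists i; split; [exact Hi | reflexivity]). apply Hf, Hi. }
  apply (minimal_cycle_no_short_detour G g c Hc Hmin (fold_index (g - 2)) (h (c (g - 1)))).
  - apply fold_index_ge. lia.
  - pose proof (fold_index_le (g - 2)). lia.
  - replace (c 0) with (h (c 0)) by (apply (Hh_fold 0); lia).
    apply Hh. exact (cycle_adj_last G g c Hc).
  - rewrite <- Hh_fold by lia. apply Hh.
    replace (g - 1) with (g - 2 + 1) by lia. apply Hwalk. lia.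
Qed.
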